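(* Let $\mathcal N$ and $\mathcal M$ be quantum channels satisfying $s$-detailed balance with respect to $\rho_\beta$, and suppose $\mathbb V_{\rho_\beta}(\mathcal M)>0$. Let $\rho$ be an arbitrary initial state and $\epsilon,\eta>0$. Set $T_{burn}=t_{mix}(\eta)$ and let $K$ satisfy $K\ge\frac{2\mathbb V_{\rho_\beta}(\mathcal M)}{\epsilon^2\eta}\,t_{aut,K}$. Then the outcomes of the single-trajectory algorithm satisfy $$\Pr_\rho\left(\left|\frac1K\sum_{t=1}^Ke_t-\mathbb E_{\rho_\beta}(\mathcal M)\right|\ge\epsilon\right)\le2\eta.$$
   Context: $H$ is an $n$-qubit Hermitian operator, $\beta>0$, $\rho_\beta=e^{-\beta H}/\operatorname{tr}(e^{-\beta H})$. For a channel $\mathcal T(X)=\sum_uK_uXK_u^\dagger$, $\mathcal T^\dagger(X)=\sum_uK_u^\dagger XK_u$. $\langle A,B\rangle_s=\operatorname{tr}(A^\dagger\rho_\beta^{1-s}B\rho_\beta^s)$; $\mathcal T$ satisfies $s$-detailed balance if $\langle A,\mathcal T^\dagger(B)\rangle_s=\langle\mathcal T^\dagger(A),B\rangle_s$ for all $A,B$. $\mathcal M$ has Kraus operators $\{O_u\}_u$ indexed by finitely many real outcomes $u$; applied to a state it gives outcome $u$ with probability $\operatorname{tr}(O_u\rho O_u^\dagger)$ and post-state $\propto O_u\rho O_u^\dagger$. $\mathbb E_{\rho_\beta}(\mathcal M)=\sum_uu\operatorname{tr}(O_u\rho_\beta O_u^\dagger)$, $\mathbb V_{\rho_\beta}(\mathcal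 M)=\sum_u|u-\mathbb E_{\rho_\beta}(\mathcal M)|^2\operatorname{tr}(O_u\rho_\beta O_u^\dagger)$, $\widehat{\mathcal M}(X)=\sum_u(u-\mathbb E_{\rho_\beta}(\mathcal M))O_uXO_u^\dagger$, $\mathcal E=\mathcal M\circ\mathcal N\circ\mathcal M$, $\widehat{\mathcal E}=\mathcal M\circ\mathcal N\circ\widehat{\mathcal M}$, $\mathrm{Cor}_{\rho_\beta}(\mathcal E^t)=\operatorname{tr}(\widehat{\mathcal E}\circ\mathcal E^t\circ\widehat{\mathcal E}(\rho_\beta))$, $C(t)=\mathrm{Cor}_{\rho_\beta}(\mathcal E^t)/\mathbb V_{\rho_\beta}(\mathcal M)$, $t_{aut,K}=\frac12+\sum_{t=1}^K(1-\frac tK)C(t-1)$. Mixing time $t_{mix}(\eta)=\min\{t\in\mathbb N:\|\mathcal N^t(\sigma)-\rho_\beta\|_1\le\eta$ for all states $\sigma\}$. Single-trajectory algorithm with inputs $\mathcal N,\mathcal M,\rho,T_{burn},K$: apply $\mathcal N$ $T_{burn}$ times to $\rho$; then for $t=1,\dots,K$ apply $\mathcal M$ (record outcome $e_t$), then $\mathcal N$, then $\mathcal M$ (outcome discarded). $\Pr_\rho$ is probability over all outcomes of this process started from $\rho$. *)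

From HB Require Import structures.
From mathcomp Require Import all_boot all_order all_algebra.
From mathcomp Require Import complex.
From mathcomp Require Import reals sequences exp.

Set Implicit Arguments.
Unset Strict Implicit.
Unset Printing Implicit Defensive.

Import Order.TTheory GRing.Theory Num.Theory.
Local Open Scope ring_scope.
Local Open Scope sesquilinear_scope.

Section Quantum.
Variable R : realType.
Local Notation C := R[i].
Variable m : nat.
Local Notation Mx := 'M[C]_m.

Definition rC (x : R) : C := (x%:C)%C.

Definition is_state (rho : Mx) : Prop :=
  rho \is hermsymmx /\
  (forall v : 'rV[C]_m, 0 <= (v *m rho *m v ^t*) 0 0) /\
  \tr rho = 1.

(* functional calculus f(A) for a Hermitian (normal) matrix A, via the
   library's spectral decomposition A = P^-1 diag(lambda) P, P unitary *)
Definition fcalc (A : Mx) (f : R -> R) : Mx :=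
  invmx (spectralmx A)
  *m diag_mx (\row_i rC (f (complex.Re (spectral_diag A 0 i))))
  *m spectralmx A.

Definition gibbs (H : Mx) (beta : R) : Mx :=
  let E := fcalc H (fun x => expR (- (beta * x))) in (\tr E)^-1 *: E.

Definition mxpowR (A : Mx) (s : R) : Mx := fcalc A (fun x => powR x s).

Definition trace_norm (X : Mx) : R :=
  \sum_i Num.sqrt (complex.Re (spectral_diag (X ^t* *m X) 0 i)).

Definition kraus (J : finType) (K : J -> Mx) (X : Mx) : Mx :=
  \sum_j (K j *m X *m (K j) ^t*).
Definition kraus_adj (J : finType) (K : J -> Mx) (X : Mx) : Mx :=
  \sum_j ((K j) ^t* *m X *m K j).

Definition is_channel (J : finType) (K : J -> Mx) : Prop :=
  \sum_j ((K j) ^t* *m K j) = 1%:M.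

Definition sinner (rho : Mx) (s : R) (A B : Mx) : C :=
  \tr (A ^t* *m mxpowR rho (1 - s) *m B *m mxpowR rho s).

Definition detailed_balance (rho : Mx) (s : R) (J : finType) (K : J -> Mx)
  : Prop :=
  forall A B : Mx,
    sinner rho s A (kraus_adj K B) = sinner rho s (kraus_adj K A) B.

(* measurement M with Kraus operators O_i and real outcome labels u i *)
Section Measurement.
Variables (I : finType) (u : I -> R) (O : I -> Mx).

Definition outcome_prob (i : I) (X : Mx) : R :=
  complex.Re (\tr (O i *m X *m (O i) ^t*)).

Definition mexpect (rho : Mx) : R := \sum_i u i * outcome_prob i rho.

Definition mvariance (rho : Mx) : R :=
  \sum_i (u i - mexpect rho) ^+ 2 * outcome_prob i rho.

Definition mhat (rho : Mx) (X : Mx) : Mx :=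
  \sum_i (rC (u i - mexpect rho) *: (O i *m X *m (O i) ^t*)).

Variables (J : finType) (Kn : J -> Mx).

Definition Ech (X : Mx) : Mx := kraus O (kraus Kn (kraus O X)).
Definition Ehat (rho : Mx) (X : Mx) : Mx := kraus O (kraus Kn (mhat rho X)).

Definition corr (rho : Mx) (t : nat) : R :=
  complex.Re (\tr (Ehat rho (iter t Ech (Ehat rho rho)))).

Definition Cnorm (rho : Mx) (t : nat) : R := corr rho t / mvariance rho.

Definition t_aut (rho : Mx) (K : nat) : R :=
  2^-1 + \sum_(1 <= t < K.+1) ((1 - t%:R / K%:R) * Cnorm rho t.-1).

(* one round of the trajectory with recorded outcome i:
   apply M (outcome i), then N, then M (outcome discarded) *)
Definition step (i : I) (X : Mx) : Mx := kraus O (kraus Kn (O i *m X *m (O i) ^t*)).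

(* unnormalised post-state after recording the outcome sequence s *)
Definition traj (s : seq I) (X : Mx) : Mx := foldl (fun Y i => step i Y) X s.

Definition traj_dev_prob (rhob rho : Mx) (Tburn K : nat) (eps : R) : R :=
  \sum_(e : K.-tuple I |
          eps <= `| K%:R^-1 * (\sum_(t < K) u (tnth e t)) - mexpect rhob |)
    complex.Re (\tr (traj e (iter Tburn (kraus Kn) rho))).

End Measurement.

Definition mixes_by (J : finType) (Kn : J -> Mx) (rhob : Mx) (eta : R)
  (t : nat) : Prop :=
  forall sigma : Mx, is_state sigma ->
    trace_norm (iter t (kraus Kn) sigma - rhob) <= eta.

Definition is_tmix (J : finType) (Kn : J -> Mx) (rhob : Mx) (eta : R)
  (T : nat) : Prop :=
  mixes_by Kn rhob eta T /\ (forall t, (t < T)%N -> ~ mixes_by Kn rhob eta t).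

End Quantum.

(* After the burn-in the state is sigma = rho_beta + (sigma - rho_beta), and the
   probability of any set of outcome sequences is linear in the initial operator.
   Expand the Hermitian operator sigma - rho_beta along its eigenprojectors: each
   projector gives the set a probability in [0, 1], so this part contributes at most
   sum_j |lambda_j| = ||sigma - rho_beta||_1 <= eta.  Detailed balance tested against
   the identity makes rho_beta a fixed point of N and M, so from rho_beta the outcome
   process is stationary; its centred sum over K rounds has second moment
   K V + 2 sum_(k<K) sum_(j<k) Cor(j) = 2 K V t_aut,K, and Chebyshev's inequality
   bounds the deviation probability by 2 V t_aut,K / (K eps^2) <= eta. *)

From HB Require Import structures.
From mathcomp Require Import all_boot all_order all_algebra.
From mathcomp Require Import complex.
From mathcomp Require Import reals sequences exp.
From mathcomp Require Import ring.

Set Implicit Arguments.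
Unset Strict Implicit.
Unset Printing Implicit Defensive.

Import Order.TTheory GRing.Theory Num.Theory.
Local Open Scope ring_scope.
Local Open Scope sesquilinear_scope.

Section Matrices.
Variables (R : realType) (m : nat).
Local Notation C := R[i].
Local Notation Mx := 'M[C]_m.

Lemma adjmxM p q r (A : 'M[C]_(p, q)) (B : 'M[C]_(q, r)) :
  (A *m B)^t* = B^t* *m A^t*.
Proof. by rewrite trmx_mul map_mxM. Qed.

Lemma adjmxZ p q (a : C) (A : 'M[C]_(p, q)) : (a *: A)^t* = a^* *: A^t*.
Proof. by apply/matrixP => i j; rewrite !mxE rmorphM. Qed.

Lemma adjmx_sum p q (T : Type) (r : seq T) (P : pred T) (F : T -> 'M[C]_(p, q)) :
  (\sum_(j <- r | P j) F j)^t* = \sum_(j <- r | P j) (F j)^t*.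
Proof. by rewrite !raddf_sum. Qed.

Lemma mxtrace_sum (T : Type) (r : seq T) (P : pred T) (F : T -> Mx) :
  \tr (\sum_(j <- r | P j) F j) = \sum_(j <- r | P j) \tr (F j).
Proof. by rewrite raddf_sum. Qed.

Lemma hermsymmxP (X : Mx) : reflect (X^t* = X) (X \is hermsymmx).
Proof. by rewrite qualifE expr0 scale1r eq_sym; apply: eqP. Qed.

Lemma hermsymmxB (X Y : Mx) :
  X \is hermsymmx -> Y \is hermsymmx -> X - Y \is hermsymmx.
Proof.
move=> /hermsymmxP hX /hermsymmxP hY; apply/hermsymmxP.
have -> : (X - Y)^t* = X^t* - Y^t* by rewrite !raddfB.
by rewrite hX hY.
Qed.

Lemma Re_rCM (c : R) (z : C) : complex.Re (rC c * z) = c * complex.Re z.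
Proof. by case: z => a b /=; rewrite mul0r subr0. Qed.

Lemma rCM (x y : R) : rC x * rC y = rC (x * y).
Proof. by rewrite /rC -rmorphM. Qed.

Lemma conj_rC (x : R) : (rC x)^* = rC x.
Proof. exact: conjc_real. Qed.

Lemma rC_Re_ge0 (z : C) : 0 <= z -> z = rC (complex.Re z) /\ 0 <= complex.Re z.
Proof. by case: z => a b; rewrite lecE /= => /andP[/eqP -> ->]. Qed.

Definition psdmx (X : Mx) := forall v : 'rV[C]_m, 0 <= (v *m X *m v^t*) 0 0.

Lemma psdmx_conj (A X : Mx) : psdmx X -> psdmx (A *m X *m A^t*).
Proof. by move=> hX v; have := hX (v *m A); rewrite adjmxM !mulmxA. Qed.

Lemma psdmx_sum (T : Type) (r : seq T) (P : pred T) (F : T -> Mx) :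
  (forall j, P j -> psdmx (F j)) -> psdmx (\sum_(j <- r | P j) F j).
Proof.
move=> hF v; rewrite mulmx_sumr mulmx_suml summxE.
by apply: sumr_ge0 => j /hF; apply.
Qed.

Lemma psdmxZ (a : C) (X : Mx) : 0 <= a -> psdmx X -> psdmx (a *: X).
Proof. by move=> ha hX v; rewrite -scalemxAr -scalemxAl mxE mulr_ge0. Qed.

Lemma psdmx_rank1 (v : 'rV[C]_m) : psdmx (v^t* *m v).
Proof.
move=> w; rewrite mulmxA -mulmxA -[v *m w^t*]trmxCK adjmxM trmxCK.
by rewrite mxE big_ord1 !mxE mul_conjC_ge0.
Qed.

Lemma psdmx_trace_ge0 (X : Mx) : psdmx X -> 0 <= complex.Re (\tr X).
Proof.
move=> hX; apply: (proj2 (rC_Re_ge0 _)); apply: sumr_ge0 => i _.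
have adj_delta : (delta_mx 0 i : 'rV[C]_m)^t* = delta_mx i 0.
  by apply/matrixP => a b; rewrite !mxE conjC_nat andbC.
by have := hX (delta_mx 0 i); rewrite -rowE adj_delta -colE !mxE.
Qed.

Lemma mxtrace_mul_delta (Z : Mx) i j : \tr (Z *m delta_mx j i) = Z i j.
Proof.
rewrite -(mul_delta_mx (0 : 'I_1)) mulmxA mxtrace_mulC mulmxA -rowE -colE.
by rewrite /mxtrace big_ord1 !mxE.
Qed.

Lemma mxtrace_mul_inj (Z1 Z2 : Mx) :
  (forall B, \tr (Z1 *m B) = \tr (Z2 *m B)) -> Z1 = Z2.
Proof.
by move=> h; apply/matrixP => i j; have := h (delta_mx j i); rewrite !mxtrace_mul_delta.
Qed.

End Matrices.

Section Kraus.
Variables (R : realType) (m : nat) (J : finType) (K : J -> 'M[R[i]]_m).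
Local Notation Mx := 'M[R[i]]_m.

Lemma kraus_is_linear : linear (kraus K).
Proof.
move=> a X Y; rewrite /kraus scaler_sumr -big_split; apply: eq_bigr => j _.
by rewrite mulmxDr mulmxDl -scalemxAr -scalemxAl.
Qed.

HB.instance Definition _ :=
  GRing.isLinear.Build R[i] Mx Mx *:%R (kraus K) kraus_is_linear.

Lemma krausZ (a : R[i]) (X : Mx) : kraus K (a *: X) = a *: kraus K X.
Proof. exact: linearZ. Qed.

Lemma kraus_sum (T : Type) (r : seq T) (P : pred T) (F : T -> Mx) :
  kraus K (\sum_(j <- r | P j) F j) = \sum_(j <- r | P j) kraus K (F j).
Proof. exact: linear_sum. Qed.

Lemma psdmx_kraus (X : Mx) : psdmx X -> psdmx (kraus K X).
Proof. by move=> hX; apply: psdmx_sum => j _; apply: psdmx_conj. Qed.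

Lemma kraus_hermsymmx (X : Mx) : X \is hermsymmx -> kraus K X \is hermsymmx.
Proof.
move/hermsymmxP => hX; apply/hermsymmxP; rewrite /kraus adjmx_sum.
by apply: eq_bigr => j _; rewrite !adjmxM trmxCK hX mulmxA.
Qed.

Lemma iter_kraus_hermsymmx t (X : Mx) :
  X \is hermsymmx -> iter t (kraus K) X \is hermsymmx.
Proof. by move=> hX; elim: t => //= t; exact: kraus_hermsymmx. Qed.

Lemma mxtrace_kraus_adj (Q B : Mx) :
  \tr (Q *m kraus_adj K B) = \tr (kraus K Q *m B).
Proof.
rewrite /kraus_adj /kraus mulmx_sumr mulmx_suml !mxtrace_sum; apply: eq_bigr => j _.
by rewrite !mulmxA mxtrace_mulC !mulmxA.
Qed.

Hypothesis chK : is_channel K.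

Lemma mxtrace_kraus (X : Mx) : \tr (kraus K X) = \tr X.
Proof.
rewrite /kraus mxtrace_sum.
under eq_bigr => j _ do rewrite mxtrace_mulC mulmxA.
by rewrite -mxtrace_sum -mulmx_suml chK mul1mx.
Qed.

Lemma kraus_adj1 : kraus_adj K 1%:M = 1%:M.
Proof. by rewrite /kraus_adj -[RHS]chK; apply: eq_bigr => j _; rewrite mulmx1. Qed.

(* Tested against [A = 1], detailed balance says that the adjoint channel preserves
   [B |-> tr (rho^(1-s) B rho^s)]; by duality, [rho^s rho^(1-s)] is a fixed point. *)
Lemma detailed_balance_fixed (rho : Mx) (s : R) :
  detailed_balance rho s K ->
  kraus K (mxpowR rho s *m mxpowR rho (1 - s)) = mxpowR rho s *m mxpowR rho (1 - s).
Proof.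
rewrite /detailed_balance /sinner.
move: (mxpowR rho s) (mxpowR rho (1 - s)) => P Q db.
apply: mxtrace_mul_inj => B; rewrite -mxtrace_kraus_adj.
have adj1 : (1%:M : Mx)^t* = 1%:M by rewrite trmx1 map_mx1.
have := db 1%:M B; rewrite kraus_adj1 adj1 !mul1mx.
by rewrite mxtrace_mulC [in RHS]mxtrace_mulC !mulmxA.
Qed.

End Kraus.

Section Spectral.
Variables (R : realType) (m : nat).
Local Notation C := R[i].
Local Notation Mx := 'M[C]_m.

Definition eigenproj (A : Mx) (j : 'I_m) : Mx :=
  (row j (spectralmx A))^t* *m row j (spectralmx A).

Lemma psdmx_eigenproj (A : Mx) j : psdmx (eigenproj A j).
Proof. exact: psdmx_rank1. Qed.

Lemma eigenproj_hermsymmx (A : Mx) j : eigenproj A j \is hermsymmx.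
Proof. by apply/hermsymmxP; rewrite adjmxM trmxCK. Qed.

Lemma mxtrace_eigenproj (A : Mx) j : \tr (eigenproj A j) = 1.
Proof.
rewrite /eigenproj mxtrace_mulC /mxtrace big_ord1.
have /unitarymxP /matrixP /(_ j j) := spectral_unitarymx A.
by rewrite !mxE eqxx mulr1n => <-; apply: eq_bigr => k _; rewrite !mxE.
Qed.

Lemma unitary_diag_sum (V : Mx) (d : 'rV[C]_m) : V \is unitarymx ->
  invmx V *m diag_mx d *m V = \sum_j d 0 j *: ((row j V)^t* *m row j V).
Proof.
move=> hV; rewrite invmx_unitary //; apply/matrixP => a b.
rewrite mul_mx_diag mxE summxE; apply: eq_bigr => j _.
by rewrite !mxE big_ord1 !mxE mulrCA mulrA.
Qed.

Lemma fcalc_sum (A : Mx) (f : R -> R) :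
  fcalc A f = \sum_j rC (f (complex.Re (spectral_diag A 0 j))) *: eigenproj A j.
Proof.
rewrite /fcalc unitary_diag_sum ?spectral_unitarymx //.
by apply: eq_bigr => j _; rewrite mxE.
Qed.

Lemma fcalcM (A : Mx) (f g : R -> R) :
  fcalc A f *m fcalc A g = fcalc A (fun x => f x * g x).
Proof.
rewrite /fcalc -!mulmxA [spectralmx A *m (invmx _ *m _)]mulmxA.
rewrite mulmxV ?spectral_unit // mul1mx [X in _ *m X = _]mulmxA.
by rewrite mulmx_diag; congr (_ *m (diag_mx _ *m _)); apply/rowP => j; rewrite !mxE rCM.
Qed.

Lemma spectral_diag_real (A : Mx) j : A \is hermsymmx ->
  spectral_diag A 0 j = rC (complex.Re (spectral_diag A 0 j)).
Proof.
by move/hermitian_spectral_diag_real/mxOverP/(_ 0 j)/RRe_real.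
Qed.

Lemma fcalc_id (A : Mx) (f : R -> R) : A \is hermsymmx ->
  (forall j, f (complex.Re (spectral_diag A 0 j)) = complex.Re (spectral_diag A 0 j)) ->
  fcalc A f = A.
Proof.
move=> hA hf; rewrite [RHS](orthomx_spectralP (hermitian_normalmx hA)) /fcalc.
by congr (_ *m diag_mx _ *m _); apply/rowP => j; rewrite mxE hf -spectral_diag_real.
Qed.

Lemma spectral_diag_conj (A : Mx) : A \is normalmx ->
  diag_mx (spectral_diag A) = spectralmx A *m A *m (spectralmx A)^t*.
Proof.
move=> /orthomx_spectralP eA; have uV := spectral_unitarymx A.
set V := spectralmx A in eA uV *; set d := spectral_diag A in eA *.
have /unitarymxP VV := uV.
by rewrite [in RHS]eA invmx_unitary // !mulmxA VV mul1mx -mulmxA VV mulmx1.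
Qed.

Lemma spectral_diag_ge0 (A : Mx) j : A \is normalmx -> psdmx A ->
  0 <= spectral_diag A 0 j.
Proof.
move=> nA /(_ (row j (spectralmx A))); congr (0 <= _).
have := congr1 (fun M : Mx => M j j) (spectral_diag_conj nA).
rewrite mxE eqxx mulr1n => ->.
by rewrite -!row_mul !mxE; apply: eq_bigr => k _; rewrite !mxE.
Qed.

Lemma mxtrace_fcalc (A : Mx) (f : R -> R) :
  \tr (fcalc A f) = rC (\sum_j f (complex.Re (spectral_diag A 0 j))).
Proof.
rewrite fcalc_sum mxtrace_sum /rC rmorph_sum; apply: eq_bigr => j _.
by rewrite mxtraceZ mxtrace_eigenproj mulr1.
Qed.

Lemma fcalc_hermsymmx (A : Mx) (f : R -> R) : fcalc A f \is hermsymmx.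
Proof.
apply/hermsymmxP; rewrite fcalc_sum adjmx_sum; apply: eq_bigr => j _.
by rewrite adjmxZ conj_rC (hermsymmxP _ (eigenproj_hermsymmx A j)).
Qed.

Lemma psdmx_fcalc (A : Mx) (f : R -> R) : (forall x, 0 <= f x) -> psdmx (fcalc A f).
Proof.
move=> f_ge0; rewrite fcalc_sum; apply: psdmx_sum => j _.
by apply: psdmxZ; [rewrite ler0c | exact: psdmx_eigenproj].
Qed.

Lemma gibbsE (H : Mx) (beta : R) :
  gibbs H beta = rC (\sum_j expR (- (beta * complex.Re (spectral_diag H 0 j))))^-1
                 *: fcalc H (fun x => expR (- (beta * x))).
Proof. by rewrite /gibbs mxtrace_fcalc /rC fmorphV. Qed.

Lemma gibbs_hermsymmx (H : Mx) (beta : R) : gibbs H beta \is hermsymmx.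
Proof.
apply/hermsymmxP; rewrite gibbsE adjmxZ conj_rC.
by rewrite (hermsymmxP _ (fcalc_hermsymmx _ _)).
Qed.

Lemma psdmx_gibbs (H : Mx) (beta : R) : psdmx (gibbs H beta).
Proof.
rewrite gibbsE; apply: psdmxZ; last by apply: psdmx_fcalc => x; exact: expR_ge0.
by rewrite ler0c invr_ge0 sumr_ge0 // => j _; exact: expR_ge0.
Qed.

Lemma powR_mul_subr (x s : R) : 0 <= x -> powR x s * powR x (1 - s) = x.
Proof.
rewrite le_eqVlt => /orP[/eqP <-|x_gt0].
  rewrite /powR eqxx; case: eqP => [->|_]; last by rewrite mul0r.
  by rewrite subr0 oner_eq0 mulr0.
by rewrite -powRD ?subrKC ?powRr1 ?ltW //; apply/implyP => _; rewrite gt_eqF.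
Qed.

Lemma mxpowR_mul_subr (A : Mx) (s : R) : A \is hermsymmx -> psdmx A ->
  mxpowR A s *m mxpowR A (1 - s) = A.
Proof.
move=> hA pA; rewrite /mxpowR fcalcM; apply: fcalc_id => // j.
apply: powR_mul_subr.
by have [] := rC_Re_ge0 (spectral_diag_ge0 j (hermitian_normalmx hA) pA).
Qed.

Lemma char_poly_unitary_diag (A P : Mx) (d : 'rV[C]_m) : P \in unitmx ->
  A = invmx P *m diag_mx d *m P -> char_poly A = \prod_j ('X - (d 0 j)%:P).
Proof.
move=> uP ->; set Q := map_mx polyC P; set Qi := map_mx polyC (invmx P).
have QiQ : Qi *m Q = 1%:M by rewrite -map_mxM mulVmx // map_mx1.
rewrite /char_poly.
have -> : char_poly_mx (invmx P *m diag_mx d *m P) =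
          Qi *m char_poly_mx (diag_mx d) *m Q.
  rewrite /char_poly_mx !map_mxM mulmxBr mulmxBl -/Q -/Qi; congr (_ - _).
  by rewrite scalar_mxC -mulmxA QiQ mulmx1.
rewrite !det_mulmx mulrAC -det_mulmx QiQ det1 mul1r -/(char_poly _).
rewrite char_poly_trig ?diag_mx_is_trig //.
by apply: eq_bigr => j _; rewrite mxE eqxx mulr1n.
Qed.

(* [trace_norm] is defined through the eigenvalues of [X^* X = X^2]; these are
   the squares of those of [X], up to a permutation detected by the
   characteristic polynomial. *)
Lemma trace_norm_hermitian (X : Mx) : X \is hermsymmx ->
  trace_norm X = \sum_j `|complex.Re (spectral_diag X 0 j)|.
Proof.
move=> hX; have /hermsymmxP XX := hX; rewrite /trace_norm XX.
set l := fun j => complex.Re (spectral_diag X 0 j).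
have eXX : X *m X = invmx (spectralmx X) *m diag_mx (\row_j rC (l j * l j)) *m spectralmx X.
  have fX : fcalc X id = X by exact: fcalc_id.
  by rewrite -{1}fX -{2}fX fcalcM.
have hXX : X *m X \is hermsymmx by apply/hermsymmxP; rewrite adjmxM XX.
have := char_poly_unitary_diag (spectral_unit _) eXX.
rewrite (char_poly_unitary_diag (spectral_unit _) (orthomx_spectralP (hermitian_normalmx hXX))).
rewrite -(big_map (fun j => spectral_diag (X *m X) 0 j) xpredT (fun x => 'X - x%:P)).
rewrite -(big_map (fun j => (\row_j rC (l j * l j)) 0 j) xpredT (fun x => 'X - x%:P)).
move/prod_XsubC_eq => perm_eig.
rewrite -(big_map _ xpredT (fun x => Num.sqrt (complex.Re x))) (perm_big _ perm_eig) big_map.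
by apply: eq_bigr => j _; rewrite mxE -expr2 sqrtr_sqr.
Qed.

End Spectral.

Lemma kraus_gibbs (R : realType) (m : nat) (H : 'M[R[i]]_m) (beta s : R)
    (J : finType) (K : J -> 'M[R[i]]_m) :
  is_channel K -> detailed_balance (gibbs H beta) s K ->
  kraus K (gibbs H beta) = gibbs H beta.
Proof.
move=> chK /(detailed_balance_fixed chK).
by rewrite mxpowR_mul_subr ?gibbs_hermsymmx //; apply: psdmx_gibbs.
Qed.

Lemma sum_tuple0 (V : nmodType) (I : finType) (F : 0.-tuple I -> V) :
  \sum_(e : 0.-tuple I) F e = F [tuple].
Proof. by rewrite (big_pred1 [tuple]) // => e; apply/esym/eqP; exact: tuple0. Qed.

Lemma sum_tupleS (V : nmodType) (I : finType) k (F : k.+1.-tuple I -> V) :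
  \sum_(e : k.+1.-tuple I) F e = \sum_(i : I) \sum_(e : k.-tuple I) F (cons_tuple i e).
Proof.
rewrite pair_bigA /= (reindex (fun p : I * k.-tuple I => cons_tuple p.1 p.2)) //=.
exists (fun e : k.+1.-tuple I => (thead e, behead_tuple e)).
  by case=> i e _ /=; congr pair; apply: val_inj.
by move=> e _ /=; rewrite [in RHS](tuple_eta e); apply: val_inj.
Qed.

Lemma sum_triangle (R : comPzRingType) (c : nat -> R) K :
  \sum_(k < K) \sum_(j < k) c j = \sum_(1 <= t < K.+1) (K%:R - t%:R) * c t.-1.
Proof.
elim: K => [|K IH]; first by rewrite big_ord0 big_geq.
rewrite big_ord_recr /= IH [RHS]big_nat_recr //= subrr mul0r addr0.
have -> : \sum_(j < K) c j = \sum_(1 <= t < K.+1) c t.-1.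
  by rewrite big_add1 /= big_mkord.
rewrite -big_split /=; apply: eq_big_nat => t _.
by rewrite -natr1 [in RHS]addrAC [in RHS]mulrDl mul1r.
Qed.

Lemma ler_sum_filter (R : numDomainType) (T : finType) (P : pred T) (F : T -> R) :
  (forall x, 0 <= F x) -> \sum_(x | P x) F x <= \sum_x F x.
Proof. by move=> F_ge0; rewrite [leRHS](bigID P) /= lerDl sumr_ge0. Qed.

Lemma chebyshev_sum (R : realFieldType) (T : finType) (f w : T -> R) (eps : R) :
  0 < eps -> (forall x, 0 <= w x) ->
  \sum_(x | eps <= `|f x|) w x <= eps ^- 2 * \sum_x f x ^+ 2 * w x.
Proof.
move=> eps_gt0 w_ge0; rewrite mulr_sumr [leRHS](bigID (fun x => eps <= `|f x|)) /=.
rewrite -[leLHS]addr0; apply: lerD.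
  apply: ler_sum => x le_eps_f; rewrite mulrA ler_peMl ?w_ge0 // -(real_normK (num_real (f x))).
  by rewrite mulrC -expr_div_n exprn_ege1 // ler_pdivlMr // mul1r.
apply: sumr_ge0 => x _; apply: mulr_ge0; first by rewrite invr_ge0 sqr_ge0.
exact: mulr_ge0 (sqr_ge0 _) (w_ge0 x).
Qed.

Lemma sample_size_bound (R : realFieldType) (V ta eps eta : R) (K : nat) :
  (0 < K)%N -> 0 < eps -> 0 < eta -> 2 * V / (eps ^+ 2 * eta) * ta <= K%:R ->
  2 * V * ta / (K%:R * eps ^+ 2) <= eta.
Proof.
move=> K_gt0 eps_gt0 eta_gt0 hK.
rewrite ler_pdivrMr ?mulr_gt0 ?exprn_gt0 ?ltr0n //.
move: hK; rewrite mulrAC ler_pdivrMr ?mulr_gt0 ?exprn_gt0 // => hK.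
by apply: le_trans hK _; rewrite mulrA mulrC.
Qed.

Lemma t_aut_size_gt0 (R : realType) (m : nat) (I J : finType) (u : I -> R)
    (O : I -> 'M[R[i]]_m) (Kn : J -> 'M[R[i]]_m) (rho : 'M[R[i]]_m) (c : R) K :
  0 < c -> c * t_aut u O Kn rho K <= K%:R -> (0 < K)%N.
Proof.
move=> c_gt0; rewrite lt0n; apply: contraTneq => ->.
by rewrite /t_aut big_geq // addr0 -ltNge; apply: mulr_gt0; rewrite ?invr_gt0.
Qed.

Section Trajectory.
Variables (R : realType) (m : nat) (I J : finType).
Variables (O : I -> 'M[R[i]]_m) (Kn : J -> 'M[R[i]]_m).
Hypotheses (chO : is_channel O) (chN : is_channel Kn).
Local Notation Mx := 'M[R[i]]_m.

Lemma step_is_linear i : linear (step O Kn i).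
Proof. by move=> a X Y; rewrite /step mulmxDr mulmxDl -scalemxAr -scalemxAl !linearP. Qed.

Lemma traj_cons i e X : traj O Kn (i :: e) X = traj O Kn e (step O Kn i X).
Proof. by []. Qed.

Lemma traj_is_linear e : linear (traj O Kn e).
Proof. by elim: e => [|i e IH] // a X Y; rewrite !traj_cons step_is_linear IH. Qed.

HB.instance Definition _ e :=
  GRing.isLinear.Build R[i] Mx Mx *:%R (traj O Kn e) (traj_is_linear e).

Definition traj_prob (e : seq I) (X : Mx) : R := complex.Re (\tr (traj O Kn e X)).

Lemma traj_prob_nil X : traj_prob [::] X = complex.Re (\tr X).
Proof. by []. Qed.

Lemma traj_prob_cons i e X : traj_prob (i :: e) X = traj_prob e (step O Kn i X).
Proof. by []. Qed.

Lemma traj_probD e X Y : traj_prob e (X + Y) = traj_prob e X + traj_prob e Y.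
Proof. by rewrite /traj_prob linearD mxtraceD raddfD. Qed.

Lemma traj_prob_sum e (T : Type) (r : seq T) (P : pred T) (F : T -> Mx) :
  traj_prob e (\sum_(j <- r | P j) F j) = \sum_(j <- r | P j) traj_prob e (F j).
Proof. by rewrite /traj_prob (raddf_sum (traj O Kn e)) mxtrace_sum raddf_sum. Qed.

Lemma traj_probZ e (c : R) X : traj_prob e (rC c *: X) = c * traj_prob e X.
Proof. by rewrite /traj_prob linearZ mxtraceZ Re_rCM. Qed.

Lemma psdmx_traj e X : psdmx X -> psdmx (traj O Kn e X).
Proof.
elim: e X => [|i e IH] X pX //; rewrite traj_cons; apply: IH.
exact/psdmx_kraus/psdmx_kraus/psdmx_conj.
Qed.

Lemma traj_prob_ge0 e X : psdmx X -> 0 <= traj_prob e X.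
Proof. by move=> pX; apply/psdmx_trace_ge0/psdmx_traj. Qed.

Lemma traj_prob_step i X : traj_prob [::] (step O Kn i X) = outcome_prob O i X.
Proof. by rewrite traj_prob_nil /step !mxtrace_kraus. Qed.

Lemma sum_step X : \sum_i step O Kn i X = Ech O Kn X.
Proof.
rewrite /Ech; have -> : kraus O X = \sum_i O i *m X *m (O i)^t* by [].
by rewrite (kraus_sum Kn) (kraus_sum O).
Qed.

Lemma sum_traj_prob_step e X :
  \sum_i traj_prob e (step O Kn i X) = traj_prob e (Ech O Kn X).
Proof. by rewrite -traj_prob_sum sum_step. Qed.

Lemma sum_traj_prob k X : \sum_(e : k.-tuple I) traj_prob e X = complex.Re (\tr X).
Proof.
elim: k X => [|k IH] X; first by rewrite sum_tuple0.
rewrite sum_tupleS /= (eq_bigr (fun i => traj_prob [::] (step O Kn i X))) => [|i _].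
  by rewrite sum_traj_prob_step /traj_prob /Ech !mxtrace_kraus.
exact: IH.
Qed.

Lemma traj_prob_le_trace_norm k (P : pred (k.-tuple I)) X : X \is hermsymmx ->
  \sum_(e : k.-tuple I | P e) traj_prob e X <= trace_norm X.
Proof.
move=> hX; rewrite trace_norm_hermitian //.
have fX : fcalc X id = X by apply: fcalc_id.
rewrite -[in X in X <= _]fX fcalc_sum.
under eq_bigr => e _ do rewrite traj_prob_sum.
under eq_bigr => e _ do under eq_bigr => j _ do rewrite traj_probZ.
rewrite exchange_big; apply: ler_sum => j _; rewrite -mulr_sumr.
set p := \sum_(e | P e) _.
have p_ge0 : 0 <= p by apply: sumr_ge0 => e _; apply/traj_prob_ge0/psdmx_eigenproj.
have p_le1 : p <= 1.
  apply: le_trans (ler_sum_filter _ _) _ => [e|]; first exact/traj_prob_ge0/psdmx_eigenproj.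
  by rewrite sum_traj_prob mxtrace_eigenproj; exact: lexx.
apply: le_trans (ler_norm _) _.
by rewrite normrM (ger0_norm p_ge0) ler_piMr.
Qed.

Variables (u : I -> R) (rb : Mx).
Local Notation E := (mexpect u O rb).

Definition centred_sum (e : seq I) : R := \sum_(i <- e) (u i - E).

Lemma centred_sum_cons i e : centred_sum (i :: e) = (u i - E) + centred_sum e.
Proof. exact: big_cons. Qed.

Lemma Ehat_step X : Ehat u O Kn rb X = \sum_i rC (u i - E) *: step O Kn i X.
Proof.
rewrite /Ehat /mhat (kraus_sum Kn) (kraus_sum O).
by apply: eq_bigr => i _; rewrite !krausZ.
Qed.

Lemma traj_prob_Ehat e X :
  traj_prob e (Ehat u O Kn rb X) = \sum_i (u i - E) * traj_prob e (step O Kn i X).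
Proof. by rewrite Ehat_step traj_prob_sum; apply: eq_bigr => i _; rewrite traj_probZ. Qed.

Lemma first_moment k X :
  \sum_(e : k.-tuple I) centred_sum e * traj_prob e X =
  \sum_(j < k) complex.Re (\tr (Ehat u O Kn rb (iter j (Ech O Kn) X))).
Proof.
elim: k X => [|k IH] X.
  by rewrite sum_tuple0 big_ord0 /centred_sum big_nil mul0r.
rewrite sum_tupleS big_ord_recl.
transitivity (traj_prob [::] (Ehat u O Kn rb X) +
    \sum_i \sum_(e : k.-tuple I) centred_sum e * traj_prob e (step O Kn i X)).
  rewrite traj_prob_Ehat -big_split; apply: eq_bigr => i _.
  rewrite traj_prob_nil -(sum_traj_prob k) mulr_sumr -big_split; apply: eq_bigr => e _.
  by rewrite centred_sum_cons traj_prob_cons mulrDl.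
congr (_ + _); rewrite exchange_big.
under eq_bigr => e _ do rewrite -mulr_sumr sum_traj_prob_step.
by rewrite IH; apply: eq_bigr => j _; rewrite lift0 iterSr.
Qed.

Hypothesis fixE : Ech O Kn rb = rb.

Lemma second_moment k :
  \sum_(e : k.-tuple I) centred_sum e ^+ 2 * traj_prob e rb =
  k%:R * mvariance u O rb + 2 * \sum_(k' < k) \sum_(j < k') corr u O Kn rb j.
Proof.
elim: k => [|k IH].
  by rewrite sum_tuple0 big_ord0 /centred_sum big_nil expr0n !mul0r mulr0 addr0.
have var : \sum_i (u i - E) ^+ 2 * traj_prob [::] (step O Kn i rb) = mvariance u O rb.
  by apply: eq_bigr => i _; rewrite traj_prob_step.
have cross : \sum_i 2 * ((u i - E) *
      \sum_(e : k.-tuple I) centred_sum e * traj_prob e (step O Kn i rb)) =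
    2 * \sum_(j < k) corr u O Kn rb j.
  rewrite -mulr_sumr -(first_moment k (Ehat u O Kn rb rb)); congr (2 * _).
  under eq_bigr => i _ do rewrite mulr_sumr.
  rewrite exchange_big; apply: eq_bigr => e _.
  by rewrite traj_prob_Ehat mulr_sumr; apply: eq_bigr => i _; rewrite mulrCA.
have tail : \sum_i \sum_(e : k.-tuple I) centred_sum e ^+ 2 * traj_prob e (step O Kn i rb) =
    \sum_(e : k.-tuple I) centred_sum e ^+ 2 * traj_prob e rb.
  rewrite exchange_big; apply: eq_bigr => e _.
  by rewrite -mulr_sumr sum_traj_prob_step fixE.
transitivity (\sum_i ((u i - E) ^+ 2 * traj_prob [::] (step O Kn i rb) +
    2 * ((u i - E) * \sum_(e : k.-tuple I) centred_sum e * traj_prob e (step O Kn i rb)) +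
    \sum_(e : k.-tuple I) centred_sum e ^+ 2 * traj_prob e (step O Kn i rb))).
  rewrite sum_tupleS; apply: eq_bigr => i _.
  rewrite traj_prob_nil -(sum_traj_prob k) !mulr_sumr -!big_split; apply: eq_bigr => e _.
  by rewrite /= centred_sum_cons traj_prob_cons; ring.
rewrite !big_split var cross tail IH big_ord_recr -natr1 /=; ring.
Qed.

Lemma second_moment_t_aut K : (0 < K)%N -> mvariance u O rb != 0 ->
  \sum_(e : K.-tuple I) centred_sum e ^+ 2 * traj_prob e rb =
  2 * K%:R * mvariance u O rb * t_aut u O Kn rb K.
Proof.
move=> K_gt0 V_neq0; have K_neq0 : (K%:R : R) != 0 by rewrite pnatr_eq0 -lt0n.
rewrite second_moment sum_triangle /t_aut /Cnorm.
move: (mvariance u O rb) (corr u O Kn rb) V_neq0 => V c V_neq0.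
rewrite mulrDr !mulr_sumr.
congr (_ + _); first by field.
by apply: eq_bigr => t _; field; rewrite K_neq0 V_neq0.
Qed.

Lemma dev_prob_stationary K eps : (0 < K)%N -> 0 < eps -> 0 < mvariance u O rb ->
  psdmx rb ->
  \sum_(e : K.-tuple I | eps <= `|K%:R^-1 * (\sum_(t < K) u (tnth e t)) - E|)
     traj_prob e rb
  <= 2 * mvariance u O rb * t_aut u O Kn rb K / (K%:R * eps ^+ 2).
Proof.
move=> K_gt0 eps_gt0 V_gt0 psd_rb.
have K_neq0 : (K%:R : R) != 0 by rewrite pnatr_eq0 -lt0n.
have avg (e : K.-tuple I) :
    K%:R^-1 * (\sum_(t < K) u (tnth e t)) - E = K%:R^-1 * centred_sum e.
  rewrite /centred_sum big_tuple sumrB sumr_const card_ord -[E *+ K]mulr_natr.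
  by rewrite mulrBr mulrCA mulVf // mulr1.
under eq_bigl => e do rewrite avg.
apply: (le_trans (chebyshev_sum (fun e : K.-tuple I => K%:R^-1 * centred_sum e)
  eps_gt0 (fun e : K.-tuple I => traj_prob_ge0 e psd_rb))).
under eq_bigr => e _ do rewrite exprMn -mulrA.
rewrite -mulr_sumr second_moment_t_aut ?lt0r_neq0 // le_eqVlt; apply/orP; left.
by apply/eqP; field; rewrite K_neq0 gt_eqF.
Qed.

End Trajectory.

Theorem lemma5p5 (R : realType) (n : nat) (H : 'M[R[i]]_(2 ^ n))
  (beta s : R) (J I : finType) (Kn : J -> 'M[R[i]]_(2 ^ n))
  (u : I -> R) (O : I -> 'M[R[i]]_(2 ^ n)) (rho : 'M[R[i]]_(2 ^ n))
  (eps eta : R) (Tburn K : nat) :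
  H \is hermsymmx -> 0 < beta ->
  is_channel Kn -> is_channel O -> injective u ->
  detailed_balance (gibbs H beta) s Kn ->
  detailed_balance (gibbs H beta) s O ->
  0 < mvariance u O (gibbs H beta) ->
  is_state rho -> 0 < eps -> 0 < eta ->
  is_tmix Kn (gibbs H beta) eta Tburn ->
  2 * mvariance u O (gibbs H beta) / (eps ^+ 2 * eta)
    * t_aut u O Kn (gibbs H beta) K <= K%:R ->
  traj_dev_prob u O Kn (gibbs H beta) rho Tburn K eps <= 2 * eta.
Proof.
move=> _ _ chN chO _ dbN dbO V_gt0 rho_state eps_gt0 eta_gt0 [mix_T _] hK.
have fixE : Ech O Kn (gibbs H beta) = gibbs H beta.
  by rewrite /Ech (kraus_gibbs chO dbO) (kraus_gibbs chN dbN) (kraus_gibbs chO dbO).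
have herm_sigma : iter Tburn (kraus Kn) rho - gibbs H beta \is hermsymmx.
  apply: hermsymmxB (gibbs_hermsymmx H beta).
  by apply: iter_kraus_hermsymmx; case: rho_state.
have K_gt0 : (0 < K)%N.
  apply: t_aut_size_gt0 hK.
  by apply: divr_gt0; apply: mulr_gt0 => //; apply: exprn_gt0.
rewrite /traj_dev_prob.
under eq_bigr => e _ do rewrite -[complex.Re _]/(traj_prob O Kn e _)
  -(subrK (gibbs H beta) (iter Tburn (kraus Kn) rho)) traj_probD.
rewrite big_split /= mulr_natl mulr2n addrC; apply: lerD.
  exact: le_trans (dev_prob_stationary chO chN fixE K_gt0 eps_gt0 V_gt0 (psdmx_gibbs H beta))
    (sample_size_bound K_gt0 eps_gt0 eta_gt0 hK).
exact: le_trans (traj_prob_le_trace_norm chO chN _ herm_sigma) (mix_T rho rho_state).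
Qed.
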